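(* Let $\mathcal{R}\subset\mathbb{R}_{>0}^n$ be a compact log-convex set and let $\ell:\mathcal{R}\to\mathbb{R}_{>0}$ be continuous. Then for every $\tilde\varepsilon>0$ there exist a positive integer $p$ and, with $T=1/p$, two functions $\psi_T,\psi'_T\in\mathrm{GPOS}_T$ with rational parameters such that for all $\mathbf{x}\in\mathcal{R}$, $$\left|\frac{\ell(\mathbf{x})-\psi_T(\mathbf{x})/\psi'_T(\mathbf{x})}{\min\big(\ell(\mathbf{x}),\psi_T(\mathbf{x})/\psi'_T(\mathbf{x})\big)}\right|\leqslant\tilde\varepsilon.$$
   Context: A set $\mathcal{R}\subset\mathbb{R}_{>0}^n$ is log-convex if its image under the entrywise logarithm is convex. A posynomial is a function $\psi:\mathbb{R}_{>0}^n\to\mathbb{R}_{>0}$, $\psi(\mathbf{x})=\sum_{k=1}^K c_k\mathbf{x}^{\boldsymbol{\alpha}^{(k)}}$, with $K$ a positive integer, $c_k>0$, $\boldsymbol{\alpha}^{(k)}\in\mathbb{R}^n$, and $\mathbf{x}^{\boldsymbol{\alpha}}=x_1^{\alpha_1}\cdots x_n^{\alpha_n}$. For $T>0$, $\mathrm{GPOS}_T$ is the class of functions $\psi_T(\mathbf{x})=(\psi(\mathbf{x}^{1/T}))^T$ with $\psi$ a posynomial (powers taken entrywise). $\psi_T\in\mathrm{GPOS}_T$ has rational parameters if it can be written so with $T$ rational, all entries of the $\boldsymbol{\alpha}^{(k)}$ rational, and all $\log c_k$ rational. *)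

From HB Require Import structures.
From mathcomp Require Import all_boot all_order all_algebra.
From mathcomp Require Import all_classical all_reals all_analysis.
Set Implicit Arguments. Unset Strict Implicit. Unset Printing Implicit Defensive.
Import Order.TTheory GRing.Theory Num.Theory.
Import numFieldNormedType.Exports.
Local Open Scope classical_set_scope.
Local Open Scope ring_scope.

Section Defs.
Variable R : realType.
Variable n : nat.

Definition pos_orthant : set 'rV[R]_n := [set x | forall i, 0 < x ord0 i].

Definition vlog (x : 'rV[R]_n) : 'rV[R]_n := map_mx (@ln R) x.

Definition log_convex (A : set 'rV[R]_n) : Prop :=
  A `<=` pos_orthant /\
  let L := vlog @` A in
  forall u v t, L u -> L v -> 0 <= t -> t <= 1 -> L (t *: u + (1 - t) *: v).

Definition monomial (alpha x : 'rV[R]_n) : R := \prod_(i < n) (x ord0 i `^ alpha ord0 i).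

Definition posynomial (K : nat) (c : 'I_K -> R) (alpha : 'I_K -> 'rV[R]_n)
  (x : 'rV[R]_n) : R := \sum_(k < K) c k * monomial (alpha k) x.

Definition posynomial_data (K : nat) (c : 'I_K -> R) (alpha : 'I_K -> 'rV[R]_n) : Prop :=
  (0 < K)%N /\ forall k, 0 < c k.

Definition gpos (T : R) (K : nat) (c : 'I_K -> R) (alpha : 'I_K -> 'rV[R]_n)
  (x : 'rV[R]_n) : R :=
  (posynomial c alpha (map_mx (fun xi => xi `^ T^-1) x)) `^ T.

(* rational parameters of the posynomial part: rational exponents, rational log c_k
   (T = 1/p is rational by construction in the theorem) *)
Definition rational_params (K : nat) (c : 'I_K -> R) (alpha : 'I_K -> 'rV[R]_n) : Prop :=
  (forall k i, exists q : rat, alpha k ord0 i = ratr q) /\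
  (forall k, exists q : rat, ln (c k) = ratr q).

End Defs.

(* In the coordinates y = ln x a term c x^alpha with c = e^q is e^(q + <alpha, y>), and for
   p = 1 a generalized posynomial is a sum of such exponentials.  Choosing rational
   alpha_j ~ 2 M Y_j and q_j ~ -M |Y_j|^2 makes the j-th term ~ e^(M |y|^2 - M |y - Y_j|^2),
   a Gaussian bump centred at the point Y_j of a finite net of the compact set ln R.  The
   ratio of sum_j e^(s_j) w_j(y) and sum_j w_j(y), with e^(s_j) ~ l at the j-th net point,
   is then a weighted average of values of l in which, for M large, net points far from y
   weigh negligibly against the nearest one, while the near ones carry values close to
   l(x) by uniform continuity of l in log coordinates. *)

From HB Require Import structures.
From mathcomp Require Import all_boot all_order all_algebra.
From mathcomp Require Import all_classical all_reals all_analysis.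
From mathcomp Require Import ring lra.
Import Order.TTheory GRing.Theory Num.Theory.
Import numFieldNormedType.Exports.
Local Open Scope classical_set_scope.
Local Open Scope ring_scope.

Set Implicit Arguments.
Unset Strict Implicit.
Unset Printing Implicit Defensive.

Lemma sumr_ge_term {R : numDomainType} {I : finType} (f : I -> R) i :
  (forall j, 0 <= f j) -> f i <= \sum_j f j.
Proof. by move=> f0; rewrite (bigD1 i) //= lerDl; apply: sumr_ge0 => j _. Qed.

Section RealInequalities.
Context {R : realType}.
Implicit Types (a b u v : R).

Lemma ln_sub_le u v : 0 < u -> 0 < v -> v * (ln u - ln v) <= u - v.
Proof.
move=> u0 v0; have := expR_ge1Dx (ln u - ln v).
rewrite expRD expRN !lnK ?posrE // => h.
have : v * (1 + (ln u - ln v)) <= v * (u / v) by rewrite ler_pM2l.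
rewrite mulrCA divff ?gt_eqF // mulr1; lra.
Qed.

Lemma ln_dist_le a u v : 0 < a -> a <= u -> a <= v ->
  `|ln u - ln v| <= `|u - v| / a.
Proof.
move=> a0 au av; have u0 : 0 < u by lra. have v0 : 0 < v by lra.
have := ln_sub_le u0 v0; have := ln_sub_le v0 u0.
rewrite ler_pdivlMr // => h1 h2.
have [D0|D0] := leP 0 (ln u - ln v).
  by rewrite (ger0_norm D0); apply: le_trans (ler_norm _); nra.
by rewrite (ltr0_norm D0) distrC; apply: le_trans (ler_norm _); nra.
Qed.

Lemma dist_le_ln_dist b u v : 0 < u -> 0 < v -> u <= b -> v <= b ->
  `|u - v| <= b * `|ln u - ln v|.
Proof.
move=> u0 v0 ub vb; have := ln_sub_le u0 v0; have := ln_sub_le v0 u0 => h1 h2.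
have [D0|D0] := leP 0 (ln u - ln v).
  by rewrite (ger0_norm D0) ler_norml; apply/andP; split; nra.
by rewrite (ltr0_norm D0) ler_norml; apply/andP; split; nra.
Qed.

Lemma norm_ln_le a b u : 0 < a -> a <= u <= b -> `|ln u| <= `|ln a| + `|ln b|.
Proof.
move=> a0 /andP[au ub]; have u0 : 0 < u by lra.
have la : ln a <= ln u by rewrite ler_ln ?posrE //; lra.
have lb : ln u <= ln b by rewrite ler_ln ?posrE //; lra.
have := ler_norm (ln b); have := ler_norm (- ln a); rewrite normrN ler_norml.
have := normr_ge0 (ln a); have := normr_ge0 (ln b); lra.
Qed.

Lemma ratr_approx (r tol : R) : 0 < tol -> exists q : rat, `|ratr q - r| <= tol.
Proof.
move=> t0; have [|q] := @rat_in_itvoo R (r - tol) (r + tol); first lra.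
by rewrite in_itv /= => /andP[h1 h2]; exists q; rewrite ler_norml; lra.
Qed.

Lemma expR_close_of_ln_dist (s u lam : R) : 0 < u -> 0 < lam ->
  `|s - ln u| <= ln lam -> u <= lam * expR s /\ expR s <= lam * u.
Proof.
move=> u0 lam0; rewrite ler_norml => /andP[h1 h2].
by rewrite -(lnK u0) -(lnK lam0) -!expRD !ler_expR; split; lra.
Qed.

Lemma rel_err_le (L r e : R) : 0 < L -> 0 <= e ->
  r <= (1 + e) * L -> L <= (1 + e) * r -> `|(L - r) / Num.min L r| <= e.
Proof.
move=> L0 e0 hr hL; have r0 : 0 < r by nra.
rewrite /Num.min; case: ifPn => [Lr|]; last rewrite -leNgt => rL.
  by rewrite ler_norml ler_pdivlMr // ler_pdivrMr //; apply/andP; split; nra.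
by rewrite ler_norml ler_pdivlMr // ler_pdivrMr //; apply/andP; split; nra.
Qed.

End RealInequalities.

Section WeightedAverage.
Context {R : realType} {K : nat} {w v : 'I_K -> R} {j0 : 'I_K} {L lam th V : R}.
Hypotheses (w_gt0 : forall j, 0 < w j) (v_bound : forall j, 0 <= v j <= V).
Hypotheses (L_gt0 : 0 < L) (lam_gt0 : 0 < lam) (th_ge0 : 0 <= th).
Hypothesis close_or_light :
  forall j, (L <= lam * v j /\ v j <= lam * L) \/ w j <= th * w j0.

Let w_le_sum : w j0 <= \sum_j w j := sumr_ge_term j0 (fun j => ltW (w_gt0 j)).

Lemma weighted_sum_ge :
  (1 - K%:R * th) * L * \sum_j w j <= lam * \sum_j w j * v j.
Proof.
apply: (@le_trans _ _ (\sum_j L * (w j - th * w j0))).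
  rewrite -mulr_sumr sumrB sumr_const card_ord -mulr_natl.
  have := mulr_ge0 (mulr_ge0 (ler0n R K) th_ge0) (ltW L_gt0).
  have := w_le_sum; have := w_gt0 j0; nra.
rewrite mulr_sumr; apply: ler_sum => j _.
have wj := w_gt0 j; have /andP[v0 _] := v_bound j.
have := mulr_ge0 (mulr_ge0 (ltW L_gt0) th_ge0) (ltW (w_gt0 j0)).
have := mulr_ge0 (ltW lam_gt0) (mulr_ge0 (ltW wj) v0).
case: (close_or_light j) => [[h1 _]|h]; last nra.
have := ler_wpM2r (ltW wj) h1; nra.
Qed.

Lemma weighted_sum_le :
  \sum_j w j * v j <= (lam * L + V * (K%:R * th)) * \sum_j w j.
Proof.
have V0 : 0 <= V by have /andP[] := v_bound j0; exact: le_trans.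
apply: (@le_trans _ _ (\sum_j (lam * L * w j + V * (th * w j0)))).
  apply: ler_sum => j _; have wj := w_gt0 j; have /andP[vj1 vj2] := v_bound j.
  have := mulr_ge0 V0 (mulr_ge0 th_ge0 (ltW (w_gt0 j0))).
  have := ler_wpM2l (ltW wj) vj2.
  case: (close_or_light j) => [[_ h2]|h].
    by have := ler_wpM2l (ltW wj) h2; nra.
  have := mulr_ge0 (mulr_ge0 (ltW lam_gt0) (ltW L_gt0)) (ltW wj).
  by have := ler_wpM2l V0 h; nra.
rewrite big_split /= -!mulr_sumr sumr_const card_ord -mulr_natr.
have : 0 <= \sum_j w j - w j0 by rewrite subr_ge0.
by move/(mulr_ge0 (mulr_ge0 (mulr_ge0 V0 (ler0n R K)) th_ge0)); nra.
Qed.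

End WeightedAverage.

Lemma weighted_avg_close {R : realType} {K : nat} (w v : 'I_K -> R) (j0 : 'I_K)
    (L th V e : R) :
  0 < e <= 1 -> 0 < L -> 0 <= th -> K%:R * th <= e / 4 -> V * (K%:R * th) <= L * e / 4 ->
  (forall j, 0 < w j) -> (forall j, 0 <= v j <= V) ->
  (forall j, (L <= (1 + e / 4) * v j /\ v j <= (1 + e / 4) * L) \/ w j <= th * w j0) ->
  let r := (\sum_j w j * v j) / \sum_j w j in r <= (1 + e) * L /\ L <= (1 + e) * r.
Proof.
move=> /andP[e0 e1] L0 th0 Kth VKth w0 v0 hj r.
have S0 : 0 < \sum_j w j := lt_le_trans (w0 j0) (sumr_ge_term j0 (fun j => ltW (w0 j))).
have r0 : 0 <= r.
  apply: divr_ge0; apply: sumr_ge0 => j _; last exact: ltW.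
  by have /andP[vj _] := v0 j; rewrite mulr_ge0 ?(ltW (w0 j)).
have lam0 : 0 < 1 + e / 4 by lra.
have lo := weighted_sum_ge w0 v0 L0 lam0 th0 hj.
have hi := weighted_sum_le w0 v0 L0 lam0 th0 hj.
set t := K%:R * th in Kth VKth lo hi.
split.
  rewrite ler_pdivrMr //; have := mulr_gt0 (mulr_gt0 e0 L0) S0.
  by have := ler_wpM2r (ltW S0) VKth; nra.
have lo' : (1 - t) * L <= (1 + e / 4) * r by rewrite /r mulrA ler_pdivlMr // -mulrA.
have : (1 + e / 4) * r <= (1 + e) * (1 - t) * r by apply: ler_wpM2r => //; nra.
have t1 : 0 < 1 - t by lra.
by rewrite -(ler_pM2l t1); nra.
Qed.

Lemma light_weight_threshold {R : realType} (K : nat) (e L V : R) :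
  0 < e -> 0 < L -> 0 <= V ->
  exists2 th : R, 0 < th & K%:R * th <= e / 4 /\ V * (K%:R * th) <= L * e / 4.
Proof.
move=> e0 L0 V0; have K0 := ler0n R K.
have D0 : 0 < (K%:R + 1) * (L + V) by apply: mulr_gt0; lra.
set c := e / (4 * ((K%:R + 1) * (L + V))).
have c0 : 0 < c by rewrite divr_gt0 // mulr_gt0.
have Dc : (K%:R + 1) * (L + V) * c = e / 4.
  by rewrite /c; field; rewrite -negb_or -mulf_eq0 mulrC gt_eqF.
have KL : K%:R * L <= (K%:R + 1) * (L + V) by nra.
have KV : K%:R * V <= (K%:R + 1) * (L + V) by nra.
exists (L * c); first exact: mulr_gt0.
split; first by rewrite -Dc mulrA ler_pM2r.
by rewrite -mulrA -Dc; have := ler_wpM2r (ltW (mulr_gt0 L0 c0)) KV; nra.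
Qed.

Section GaussianExponents.
Context {R : realType} {n : nat}.
Implicit Types (y Y d : 'I_n -> R).

Lemma sum_sqr_lt d h : (forall i, `|d i| < h) -> \sum_i d i ^+ 2 <= n%:R * h ^+ 2.
Proof.
move=> dh; apply: (@le_trans _ _ (\sum_(i < n) h ^+ 2)).
  apply: ler_sum => i _.
  by rewrite -real_normK ?num_real // lerXn2r ?nnegrE // ltW // (le_lt_trans _ (dh i)).
by rewrite sumr_const card_ord mulr_natl.
Qed.

(* The Gaussian exponent M |y|^2 - M |y - Y|^2 = 2 M <Y, y> - M |Y|^2 is affine in y. *)
Lemma rat_gaussian_exponents {K : nat} (Y : 'I_K -> 'I_n -> R) (M Ly : R) : 0 <= Ly ->
  exists (Q : 'I_K -> 'I_n -> rat) (q : 'I_K -> rat), forall j y,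
    (forall i, `|y i| <= Ly) ->
    `|ratr (q j) + \sum_i ratr (Q j i) * y i
      - M * (\sum_i y i ^+ 2 - \sum_i (y i - Y j i) ^+ 2)| <= 1 / 2.
Proof.
move=> Ly0; have nLy0 := mulr_ge0 (ler0n R n) Ly0.
set tau := (2 * (1 + n%:R * Ly))^-1.
have tau0 : 0 < tau by rewrite invr_gt0; lra.
have tauLy : tau * (1 + n%:R * Ly) = 1 / 2 by rewrite /tau; field; lra.
have [Q hQ] := fin_all_exists (fun j => fin_all_exists (fun i => ratr_approx (2 * M * Y j i) tau0)).
have [q hq] := fin_all_exists (fun j => ratr_approx (- (M * \sum_i Y j i ^+ 2)) tau0).
exists Q, q => j y hy.
have -> : ratr (q j) + \sum_i ratr (Q j i) * y i
    - M * (\sum_i y i ^+ 2 - \sum_i (y i - Y j i) ^+ 2)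
  = (ratr (q j) - - (M * \sum_i Y j i ^+ 2))
    + \sum_i (ratr (Q j i) - 2 * M * Y j i) * y i.
  rewrite mulrBr !mulr_sumr opprK -sumrB -!addrA; congr (_ + _).
  by rewrite -sumrB -big_split /=; apply: eq_bigr => i _; ring.
apply: le_trans (ler_normD _ _) _.
have : `|\sum_i (ratr (Q j i) - 2 * M * Y j i) * y i| <= n%:R * (tau * Ly).
  apply: le_trans (ler_norm_sum _ _ _) _.
  apply: (@le_trans _ _ (\sum_(i < n) tau * Ly)).
    by apply: ler_sum => i _; rewrite normrM; apply: ler_pM.
  by rewrite sumr_const card_ord mulr_natl.
have := hq j; lra.
Qed.

Lemma gaussian_far_le (M eta E E0 : R) y Y Y0 :
  0 <= M -> (exists i, eta <= `|Y i - y i|) ->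
  (forall i, `|Y0 i - y i| < eta / (n%:R + 1)) ->
  `|E - M * (\sum_i y i ^+ 2 - \sum_i (y i - Y i) ^+ 2)| <= 1 / 2 ->
  `|E0 - M * (\sum_i y i ^+ 2 - \sum_i (y i - Y0 i) ^+ 2)| <= 1 / 2 ->
  E <= E0 + 1 - M * eta ^+ 2 / 2.
Proof.
move=> M0 [i far] near; rewrite !ler_norml => /andP[_ hE] /andP[hE0 _].
have n1 : 0 < n%:R + 1 :> R by have := ler0n R n; lra.
have eta0 : 0 <= eta.
  by have := le_lt_trans (normr_ge0 _) (near i); rewrite ltr_pdivlMr // mul0r => /ltW.
have far_sq : eta ^+ 2 <= \sum_k (y k - Y k) ^+ 2.
  apply: le_trans (sumr_ge_term i (fun k => sqr_ge0 (y k - Y k))) => /=.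
  by rewrite -[_ ^+ 2 in X in _ <= X]real_normK ?num_real // distrC lerXn2r ?nnegrE.
have near_sq : \sum_k (y k - Y0 k) ^+ 2 <= eta ^+ 2 / 2.
  apply: le_trans (sum_sqr_lt (h := eta / (n%:R + 1)) _) _.
    by move=> k; rewrite distrC.
  rewrite expr_div_n mulrA ler_pdivrMr ?exprn_gt0 //.
  by have := mulr_ge0 (sqr_ge0 eta) (addr_ge0 (sqr_ge0 (n%:R : R)) ler01); nra.
have := ler_wpM2l M0 far_sq; have := ler_wpM2l M0 near_sq; lra.
Qed.

End GaussianExponents.

Definition log_posynomial {R : realType} {K n : nat} (c : 'I_K -> R)
  (alpha : 'I_K -> 'I_n -> R) (y : 'I_n -> R) : R :=
  \sum_(k < K) c k * expR (\sum_(i < n) alpha k i * y i).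

Section LogCoordinateApproximation.
Context {R : realType} {X : Type} {n K : nat}.
Variables (A : set X) (y : X -> 'I_n -> R) (g : X -> R) (z : 'I_K -> X).
Variables (Ly Lmin eta lam e : R).
Hypotheses (e_gt0 : 0 < e) (e_le1 : e <= 1).
Hypotheses (lam_gt1 : 1 < lam) (lam_sqr_le : lam ^+ 2 <= 1 + e / 4).
Hypotheses (Ly_ge0 : 0 <= Ly) (y_bounded : forall x, A x -> forall i, `|y x i| <= Ly).
Hypotheses (Lmin_gt0 : 0 < Lmin) (g_ge : forall x, A x -> Lmin <= g x).
Hypotheses (eta_gt0 : 0 < eta) (g_rel_cont : forall x x', A x -> A x' ->
  (forall i, `|y x i - y x' i| < eta) -> g x' <= lam * g x).
Hypotheses (z_in : forall j, A (z j)) (z_net : forall x, A x ->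
  exists j, forall i, `|y (z j) i - y x i| < eta / (n%:R + 1)).

Lemma net_value_close (s : 'I_K -> R) :
  (forall j, `|s j - ln (g (z j))| <= ln lam) ->
  forall x j, A x -> (forall i, `|y (z j) i - y x i| < eta) ->
  g x <= lam ^+ 2 * expR (s j) /\ expR (s j) <= lam ^+ 2 * g x.
Proof.
move=> hs x j Ax close; have lam0 : 0 < lam := lt_trans ltr01 lam_gt1.
have gz0 : 0 < g (z j) by exact: lt_le_trans Lmin_gt0 (g_ge (z_in j)).
have [lo hi] := expR_close_of_ln_dist gz0 lam0 (hs j).
have gx : g x <= lam * g (z j) by exact: g_rel_cont.
have gz : g (z j) <= lam * g x by apply: g_rel_cont => // i; rewrite distrC.
by rewrite expr2 -!mulrA; split; [apply: le_trans gx _ | apply: le_trans hi _];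
  rewrite ler_pM2l.
Qed.

Lemma log_posynomial_ratio_approx_net :
  exists (Q : 'I_K -> 'I_n -> rat) (q s : 'I_K -> rat), forall x, A x ->
    let alpha j i := ratr (Q j i) in
    let r := log_posynomial (fun j => expR (ratr (q j + s j))) alpha (y x)
           / log_posynomial (fun j => expR (ratr (q j))) alpha (y x) in
    r <= (1 + e) * g x /\ g x <= (1 + e) * r.
Proof.
have [s hs] := fin_all_exists (fun j => ratr_approx (ln (g (z j))) (ln_gt0 lam_gt1)).
pose v j : R := expR (ratr (s j)).
have [V v_bound V0] : exists2 V : R, (forall j, 0 <= v j <= V) & 0 <= V.
  exists (\sum_j v j) => [j|]; last by apply: sumr_ge0 => k _; exact: expR_ge0.
  by rewrite expR_ge0 sumr_ge_term // => k; exact: expR_ge0.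
have [th th0 [Kth VKth]] := light_weight_threshold K e_gt0 Lmin_gt0 V0.
(* With this M, a net point at sup-distance >= eta from y weighs at most th times the
   nearest one. *)
have [M [M0 hM]] : exists M : R, 0 <= M /\ 1 - M * eta ^+ 2 / 2 <= ln th.
  exists (2 * `|1 - ln th| / eta ^+ 2); split; first by rewrite divr_ge0 ?sqr_ge0.
  rewrite divfK ?sqrf_eq0 ?gt_eqF //.
  by have := ler_norm (1 - ln th); lra.
have [Q [q hQq]] := rat_gaussian_exponents (fun j i => y (z j) i) M Ly_ge0.
exists Q, q, s => x Ax alpha.
pose w j := expR (ratr (q j) + \sum_i alpha j i * y x i).
have -> : log_posynomial (fun j => expR (ratr (q j + s j))) alpha (y x)
          = \sum_j w j * v j.
  by apply: eq_bigr => j _; rewrite /w /v rmorphD !expRD; ring.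
have -> : log_posynomial (fun j => expR (ratr (q j))) alpha (y x) = \sum_j w j.
  by apply: eq_bigr => j _; rewrite /w expRD.
have [j0 near] := z_net Ax.
have gx := g_ge Ax.
apply: (@weighted_avg_close _ _ w v j0 (g x) th V e) => //.
- by rewrite e_gt0.
- exact: lt_le_trans gx.
- exact: ltW.
- by apply: le_trans VKth _; rewrite -!mulrA ler_pM2r ?divr_gt0.
- by move=> j; exact: expR_gt0.
move=> j; have [close|] := boolP [forall i, `|y (z j) i - y x i| < eta].
  have [lo hi] := net_value_close hs Ax (fun i => forallP close i).
  by left; split; [apply: le_trans lo _ | apply: le_trans hi _];
    rewrite ler_pM2r ?expR_gt0 //; apply: lt_le_trans gx.
rewrite negb_forall => /existsP[i]; rewrite -leNgt => far.
right; rewrite /w -(lnK th0) -expRD ler_expR.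
have := gaussian_far_le M0 (ex_intro _ i far) near
  (hQq j _ (y_bounded Ax)) (hQq j0 _ (y_bounded Ax)).
lra.
Qed.

End LogCoordinateApproximation.

Lemma log_posynomial_ratio_approx {R : realType} {X : Type} {n : nat} (A : set X)
    (y : X -> 'I_n -> R) (g : X -> R) (Ly Lmin : R) :
  A !=set0 -> 0 <= Ly -> (forall x, A x -> forall i, `|y x i| <= Ly) ->
  0 < Lmin -> (forall x, A x -> Lmin <= g x) ->
  (forall lam : R, 1 < lam -> exists2 eta : R, 0 < eta & forall x x', A x -> A x' ->
     (forall i, `|y x i - y x' i| < eta) -> g x' <= lam * g x) ->
  (forall h : R, 0 < h -> exists K (z : 'I_K -> X), (forall j, A (z j)) /\
     forall x, A x -> exists j, forall i, `|y (z j) i - y x i| < h) ->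
  forall e : R, 0 < e -> e <= 1 ->
  exists K (Q : 'I_K -> 'I_n -> rat) (q s : 'I_K -> rat), (0 < K)%N /\
    forall x, A x ->
    let alpha j i := ratr (Q j i) in
    let r := log_posynomial (fun j => expR (ratr (q j + s j))) alpha (y x)
           / log_posynomial (fun j => expR (ratr (q j))) alpha (y x) in
    r <= (1 + e) * g x /\ g x <= (1 + e) * r.
Proof.
move=> [x0 Ax0] Ly0 y_bnd Lmin0 g_ge g_cont y_net e e0 e1.
have lam1 : 1 < 1 + e / 16 by rewrite ltrDl divr_gt0.
have lam_sqr : (1 + e / 16) ^+ 2 <= 1 + e / 4 by nra.
have [eta eta0 g_eta] := g_cont _ lam1.
have [K [z [zA z_net]]] := y_net _ (divr_gt0 eta0 (ltr_wpDl (ler0n R n) ltr01)).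
have [Q [q [s approx]]] := log_posynomial_ratio_approx_net
  e0 e1 lam1 lam_sqr Ly0 y_bnd Lmin0 g_ge eta0 g_eta zA z_net.
have [j _] := z_net x0 Ax0.
by exists K, Q, q, s; split=> //; exact: leq_ltn_trans (leq0n j) (ltn_ord j).
Qed.

Lemma compact_unif_continuous {R : realType} {T : pseudoMetricType R} (A : set T)
    (f : T -> R) :
  compact A -> {within A, continuous f} -> forall e : R, 0 < e ->
  exists2 d : R, 0 < d & forall x x', A x -> A x' -> ball x d x' -> `|f x - f x'| < e.
Proof.
move=> /compact_near_coveringP/near_covering_withinP cA /subspace_continuousP cf e e0.
have e2 : 0 < e / 2 by rewrite divr_gt0.
have := cA R (0^'+) (fun d x => forall x', A x' -> ball x d x' -> `|f x - f x'| < e) _.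
case; last first.
  move=> r /= r0 H; exists (r / 2); first by rewrite divr_gt0.
  move=> x x' Ax Ax' xx'; apply: (H (r / 2)) => //; last by rewrite divr_gt0.
  by rewrite /ball_ /= sub0r normrN gtr0_norm ?divr_gt0 // ltr_pdivrMr // ltr_pMr // ltr1n.
move=> x Ax; have := cf x Ax => /cvgrPdist_lt/(_ _ e2).
rewrite near_withinE => /nbhs_ballP[d d0 hd].
have d2 : 0 < d / 2 by rewrite divr_gt0.
exists (ball x (d / 2), [set r | 0 < r < d / 2]).
  split; first exact: nbhsx_ballx.
  exists (d / 2) => // r /=; rewrite sub0r normrN => hr r0.
  by rewrite r0 (le_lt_trans (ler_norm r) hr).
case=> x' r /= [xx' /andP[r0 rd]] Ax' x'' Ax'' x'x''.
have xx'' : ball x d x''.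
  by rewrite (splitr d); apply: ball_triangle xx' (le_ball (ltW rd) x'x'').
have dd : d / 2 <= d by rewrite ler_pdivrMr // ler_pMr // ler1n.
have h1 : `|f x - f x'| < e / 2 := hd x' (le_ball dd xx') Ax'.
have h2 : `|f x - f x''| < e / 2 := hd x'' xx'' Ax''.
have := ler_distD (f x) (f x') (f x''); rewrite [`|f x' - f x|]distrC; lra.
Qed.

Lemma compact_finite_net {R : realType} {T : pseudoMetricNormedZmodType R} (A : set T) :
  compact A -> forall d : R, 0 < d ->
  exists K (z : 'I_K -> T), (forall j, A (z j)) /\
    forall x, A x -> exists j, ball (z j) d x.
Proof.
move=> cA d d0; move: cA; rewrite (@compact_cover T) => cA.
have [|D DA cover_D] := cA _ A (fun z => ball z d) (fun z _ => ball_open z d).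
  by move=> x Ax; exists x => //; exact: ballxx.
pose s := in_tuple (finmap.enum_fset D).
exists (size (finmap.enum_fset D)), (tnth s); split.
  by move=> j; apply/set_mem/DA; exact: mem_tnth.
move=> x /cover_D[z /= zD xz]; have /tnthP[j zj] : z \in s by [].
by exists j; rewrite -zj.
Qed.

Lemma finite_pos_lower_bound {R : realType} (I : finType) (f : I -> R) :
  (forall i, 0 < f i) -> exists2 a : R, 0 < a & forall i, a <= f i.
Proof.
move=> f0; have S0 : 0 <= \sum_i (f i)^-1.
  by apply: sumr_ge0 => i _; rewrite invr_ge0 ltW.
exists (1 + \sum_i (f i)^-1)^-1; first by rewrite invr_gt0; lra.
move=> i; rewrite -[f i]invrK lef_pV2 ?posrE ?invr_gt0 //; last by lra.
rewrite (bigD1 i) //= addrCA lerDl addr_ge0 //.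
by apply: sumr_ge0 => j _; rewrite invr_ge0 ltW.
Qed.

Section PositiveOrthant.
Context {R : realType} {n : nat}.
Implicit Types (A : set 'rV[R]_n) (x : 'rV[R]_n).

Lemma row_ballP x x' (d : R) : 0 < d ->
  ball x d x' <-> forall i, `|x ord0 i - x' ord0 i| < d.
Proof.
move=> d0; split=> [[_ h] i|h]; first exact: h.
by split=> // i j; rewrite (ord1 i); exact: h.
Qed.

Lemma compact_coord_bounds A : compact A -> A `<=` @pos_orthant R n -> A !=set0 ->
  exists a b : R, [/\ 0 < a, 0 < b & forall x, A x -> forall i, a <= x ord0 i <= b].
Proof.
move=> cA Apos A0.
have coord_cont i := continuous_subspaceT (@coord_continuous R 1 n ord0 i) (A := A).
have lo_ex i : exists c, A c /\ forall x, A x -> c ord0 i <= x ord0 i.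
  have [c /set_mem Ac hc] := EVT_min_rV A0 cA (coord_cont i).
  by exists c; split=> // x Ax; apply: hc; exact: mem_set.
have hi_ex i : exists c, A c /\ forall x, A x -> x ord0 i <= c ord0 i.
  have [c /set_mem Ac hc] := EVT_max_rV A0 cA (coord_cont i).
  by exists c; split=> // x Ax; apply: hc; exact: mem_set.
have [lo lo_min] := fin_all_exists lo_ex.
have [hi hi_max] := fin_all_exists hi_ex.
have [a a0 ha] := finite_pos_lower_bound (fun i => Apos _ (lo_min i).1 i).
have hi_inv i : 0 < (hi i ord0 i)^-1 by rewrite invr_gt0; exact: Apos _ (hi_max i).1 i.
have [b' b0 hb] := finite_pos_lower_bound hi_inv.
exists a, b'^-1; split; rewrite ?invr_gt0 // => x Ax i; apply/andP; split.
  exact: le_trans (ha i) ((lo_min i).2 x Ax).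
apply: le_trans ((hi_max i).2 x Ax) _.
by rewrite -[hi i ord0 i]invrK lef_pV2 ?posrE ?hi_inv //; exact: hb.
Qed.

Lemma log_finite_net A (a : R) : compact A -> 0 < a ->
  (forall x, A x -> forall i, a <= x ord0 i) -> forall h : R, 0 < h ->
  exists K (z : 'I_K -> 'rV[R]_n), (forall j, A (z j)) /\
    forall x, A x -> exists j, forall i, `|ln (z j ord0 i) - ln (x ord0 i)| < h.
Proof.
move=> cA a0 Aa h h0; have ha0 := mulr_gt0 h0 a0.
have [K [z [zA znet]]] := compact_finite_net cA ha0.
exists K, z; split=> // x Ax; have [j /(row_ballP _ _ ha0) zx] := znet x Ax.
exists j => i; apply: le_lt_trans (ln_dist_le a0 (Aa _ (zA j) i) (Aa _ Ax i)) _.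
by rewrite ltr_pdivrMr.
Qed.

Lemma log_rel_unif_continuous A (l : 'rV[R]_n -> R) (a b Lmin lam : R) :
  compact A -> {within A, continuous l} -> 0 < a -> 0 < b ->
  (forall x, A x -> forall i, a <= x ord0 i <= b) ->
  0 < Lmin -> (forall x, A x -> Lmin <= l x) -> 1 < lam ->
  exists2 eta : R, 0 < eta & forall x x', A x -> A x' ->
    (forall i, `|ln (x ord0 i) - ln (x' ord0 i)| < eta) -> l x' <= lam * l x.
Proof.
move=> cA cl a0 b0 Aab Lmin0 lLmin lam1; have lam0 : 0 < lam - 1 by rewrite subr_gt0.
have [d d0 hd] := compact_unif_continuous cA cl (mulr_gt0 lam0 Lmin0).
exists (d / b) => [|x x' Ax Ax' close]; first by rewrite divr_gt0.
have : `|l x - l x'| < (lam - 1) * Lmin.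
  apply: hd => //; apply/row_ballP => // i.
  have /andP[xia xib] := Aab _ Ax i; have /andP[x'ia x'ib] := Aab _ Ax' i.
  apply: le_lt_trans (dist_le_ln_dist (lt_le_trans a0 xia) (lt_le_trans a0 x'ia) xib x'ib) _.
  by rewrite mulrC -ltr_pdivlMr.
have := ler_wpM2l (ltW lam0) (lLmin _ Ax); rewrite ltr_norml; lra.
Qed.

End PositiveOrthant.

Section GeneralizedPosynomials.
Context {R : realType} {n K : nat}.

Lemma gpos1E (c : 'I_K -> R) (alpha : 'I_K -> 'rV[R]_n) (x : 'rV[R]_n) :
  (forall i, 0 < x ord0 i) -> (forall k, 0 <= c k) ->
  gpos (1%:R^-1) c alpha x
  = log_posynomial c (fun k i => alpha k ord0 i) (fun i => ln (x ord0 i)).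
Proof.
move=> x0 c0; rewrite /gpos invr1.
have -> : map_mx (fun xi => xi `^ 1^-1) x = x.
  by apply/matrixP => i j; rewrite mxE (ord1 i) invr1 powRr1 // ltW.
rewrite powRr1; last first.
  apply: sumr_ge0 => k _; apply: mulr_ge0 => //.
  by apply: prodr_ge0 => i _; exact: powR_ge0.
apply: eq_bigr => k _; congr (_ * _).
by rewrite /monomial expR_sum; apply: eq_bigr => i _; rewrite /powR gt_eqF.
Qed.

Lemma exp_rat_posynomial_data (q : 'I_K -> rat) (Q : 'I_K -> 'I_n -> rat) : (0 < K)%N ->
  let c j := expR (ratr (q j) : R) in let alpha j : 'rV[R]_n := \row_i ratr (Q j i) in
  posynomial_data c alpha /\ rational_params c alpha.
Proof.
move=> K0 c alpha; split; first by split=> // k; exact: expR_gt0.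
by split=> [k i|k]; [exists (Q k i); rewrite mxE | exists (q k); rewrite expRK].
Qed.

End GeneralizedPosynomials.

Theorem theorem3 (R : realType) (n : nat) (A : set 'rV[R]_n) (l : 'rV[R]_n -> R) :
  compact A -> log_convex A ->
  {within A, continuous l} -> (forall x, A x -> 0 < l x) ->
  forall eps : R, 0 < eps ->
  exists p : nat, (0 < p)%N /\
  exists (K : nat) (c : 'I_K -> R) (alpha : 'I_K -> 'rV[R]_n)
         (K' : nat) (c' : 'I_K' -> R) (alpha' : 'I_K' -> 'rV[R]_n),
    posynomial_data c alpha /\ rational_params c alpha /\
    posynomial_data c' alpha' /\ rational_params c' alpha' /\
    forall x, A x ->
      let r := gpos (p%:R^-1) c alpha x / gpos (p%:R^-1) c' alpha' x in
      `| (l x - r) / Num.min (l x) r | <= eps.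
Proof.
move=> cA [Apos _] cl lpos eps eps0.
pose row_rat K (Q : 'I_K -> 'I_n -> rat) j : 'rV[R]_n := \row_i ratr (Q j i).
have [[x0 Ax0]|A0] := pselect (A !=set0); last first.
  exists 1%N; split=> //; exists 1%N, (fun=> expR (ratr 0)), (row_rat 1%N (fun _ _ => 0)).
  exists 1%N, (fun=> expR (ratr 0)), (row_rat 1%N (fun _ _ => 0)).
  have [pd rp] := @exp_rat_posynomial_data R n 1 (fun=> 0) (fun _ _ => 0) isT.
  by do 4!split=> //; move=> x Ax; case: A0; exists x.
set e := Num.min eps 1.
have [e0 e1 e_eps] : [/\ 0 < e, e <= 1 & e <= eps].
  by rewrite lt_min eps0 ltr01 ge_min lexx orbT ge_min lexx.
have [a [b [a0 b0 Aab]]] := compact_coord_bounds cA Apos (ex_intro _ x0 Ax0).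
have [xm /set_mem Axm xm_min] := EVT_min_rV (ex_intro _ x0 Ax0) cA cl.
have l_ge x : A x -> l xm <= l x by move=> Ax; apply: xm_min; exact: mem_set.
have [K [Q [q [s [K0 approx]]]]] := log_posynomial_ratio_approx
  (y := fun (x : 'rV[R]_n) i => ln (x ord0 i)) (ex_intro _ x0 Ax0)
  (addr_ge0 (normr_ge0 (ln a)) (normr_ge0 (ln b)))
  (fun x (Ax : A x) i => norm_ln_le a0 (Aab x Ax i)) (lpos _ Axm) l_ge
  (fun lam => log_rel_unif_continuous cA cl a0 b0 Aab (lpos _ Axm) l_ge)
  (log_finite_net cA a0 (fun x Ax i => proj1 (andP (Aab x Ax i)))) e0 e1.
exists 1%N; split=> //; exists K, (fun j => expR (ratr (q j + s j))), (row_rat K Q).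
exists K, (fun j => expR (ratr (q j))), (row_rat K Q).
have [pd rp] := @exp_rat_posynomial_data R n K (fun j => q j + s j) Q K0.
have [pd' rp'] := @exp_rat_posynomial_data R n K q Q K0.
do 4!split=> //; move=> x Ax /=.
have rowE : (fun k i => row_rat K Q k ord0 i) = (fun k i => ratr (Q k i) : R).
  by apply/funext => k; apply/funext => i; rewrite mxE.
rewrite !gpos1E ?rowE => [|i|k|i|k]; try exact: expR_ge0; try exact: Apos.
have [r_le l_le] := approx x Ax.
by apply: le_trans e_eps; apply: rel_err_le => //; [exact: lpos | exact: ltW].
Qed.
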